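(* Fix $p\in(0,1/2]$, an integer $k\ge 1$, and $\epsilon>0$. There exist $c=c(p,k,\epsilon)>0$ and $n_0=n_0(p,k,\epsilon)$ such that the following holds. Let $n\ge n_0$, let $M$ be an $(n-k)\times n$ random matrix with independent $\operatorname{Ber}(p)$ entries, and let $V$ be a (deterministic) $n\times k$ real matrix with orthonormal columns. Then \[\mathbb{P}\big[\|MV\|_{\operatorname{HS}}\le c\sqrt{n}\big]\le (1-p+\epsilon)^{kn}.\]
   Context: $\operatorname{Ber}(p)$ takes value $1$ with probability $p$ and $0$ with probability $1-p$. For a matrix $A=(A_{ij})$, $\|A\|_{\operatorname{HS}}^2=\sum_{i,j}A_{ij}^2$ (Hilbert–Schmidt norm). *)

From HB Require Import structures.
From mathcomp Require Import all_boot all_order all_algebra.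
From mathcomp Require Import reals.
Set Implicit Arguments. Unset Strict Implicit. Unset Printing Implicit Defensive.
Import Order.TTheory GRing.Theory Num.Theory.
Local Open Scope ring_scope.

Definition ber_weight (R : realType) (p : R) (m n : nat) (M : 'M[bool]_(m, n)) : R :=
  \prod_(i < m) \prod_(j < n) (if M i j then p else 1 - p).

Definition ber_prob (R : realType) (p : R) (m n : nat) (E : pred 'M[bool]_(m, n)) : R :=
  \sum_(M : 'M[bool]_(m, n) | E M) ber_weight p M.

Definition real_of_bmx (R : realType) (m n : nat) (M : 'M[bool]_(m, n)) : 'M[R]_(m, n) :=
  map_mx (fun b : bool => (b : nat)%:R) M.

Definition hs_norm (R : realType) (m n : nat) (A : 'M[R]_(m, n)) : R :=
  Num.sqrt (\sum_(i < m) \sum_(j < n) A i j ^+ 2).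

From HB Require Import structures.
From mathcomp Require Import all_boot all_order all_algebra.
From mathcomp Require Import reals.
From mathcomp Require Import boolp topology normedtype sequences derive trigo.
From mathcomp Require Import complex.
From mathcomp Require Import ring lra zify.
Import numFieldNormedType.Exports.
Import Order.TTheory GRing.Theory Num.Theory.
Local Open Scope ring_scope.

Set Implicit Arguments. Unset Strict Implicit. Unset Printing Implicit Defensive.

(* The rows of M are independent Ber(p) vectors x, and |x V|^2 = x P x^T for the
   orthogonal projection P = V V^T of rank k.  The heart of the matter is a single row:
   P[x P x^T <= d^2] <= (1 - p)^k for some d > 0 depending only on p and k.  If some
   diagonal entry P_ll exceeds 4 d^2, flipping x_l moves <x, row l P> by P_ll, so x and
   its flip cannot both be short in that direction; splitting the direction off costs a
   factor 1 - p and lowers the rank by one.  Otherwise x P x^T dominates <x, v>^2 for a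
   unit vector v with coordinates O(d), and an Esseen-type bound on the characteristic
   function of <x, v> makes P[|<x, v>| <= d] as small as we please once d is small.
   Finally, if |M V|_HS <= c sqrt n, all but (n - k) / L rows satisfy x P x^T <= d^2,
   and a product (Chernoff-type) bound over the independent rows turns the per-row
   bound (1 - p)^k < (1 - p + eps)^k into the claim. *)

Section BernoulliVector.
Variables (R : realType) (p : R).
Hypotheses (p_ge0 : 0 <= p) (p_le1 : p <= 1).

Definition berw (b : bool) : R := if b then p else 1 - p.

Definition ber_vweight n (x : {ffun 'I_n -> bool}) : R := \prod_i berw (x i).

Definition ber_expect n (F : {ffun 'I_n -> bool} -> R) : R :=
  \sum_x ber_vweight x * F x.

Definition ber_vprob n (A : pred {ffun 'I_n -> bool}) : R :=
  ber_expect (fun x => (A x)%:R).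

Lemma berw_ge0 b : 0 <= berw b.
Proof. by have := p_ge0; have := p_le1; rewrite /berw; case: b => /=; lra. Qed.

Lemma ber_vweight_ge0 n (x : {ffun 'I_n -> bool}) : 0 <= ber_vweight x.
Proof. by apply: prodr_ge0 => i _; apply: berw_ge0. Qed.

Lemma ber_expect_prod n (F : 'I_n -> bool -> R) :
  ber_expect (fun x => \prod_i F i (x i)) = \prod_i \sum_(b : bool) berw b * F i b.
Proof.
by rewrite bigA_distr_bigA; apply: eq_bigr => x _; rewrite -big_split.
Qed.

Lemma ber_vweight_sum n : \sum_(x : {ffun 'I_n -> bool}) ber_vweight x = 1.
Proof.
have := ber_expect_prod (fun (_ : 'I_n) (_ : bool) => 1).
rewrite /ber_expect (eq_bigr (fun x => ber_vweight x)) => [->|x _]; last by rewrite big1 ?mulr1.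
by apply: big1 => i _; rewrite big_bool /= !mulr1; lra.
Qed.

Lemma ber_expect_cst n (c : R) : ber_expect (fun _ : {ffun 'I_n -> bool} => c) = c.
Proof. by rewrite /ber_expect -mulr_suml ber_vweight_sum mul1r. Qed.

Lemma ler_ber_expect n (F G : {ffun 'I_n -> bool} -> R) :
  (forall x, F x <= G x) -> ber_expect F <= ber_expect G.
Proof. by move=> FG; apply: ler_sum => x _; rewrite ler_wpM2l ?ber_vweight_ge0. Qed.

Lemma ber_expectD n (F G : {ffun 'I_n -> bool} -> R) :
  ber_expect (fun x => F x + G x) = ber_expect F + ber_expect G.
Proof. by rewrite -big_split; apply: eq_bigr => x _; rewrite mulrDr. Qed.

Lemma ber_expectZ n c (F : {ffun 'I_n -> bool} -> R) :
  ber_expect (fun x => c * F x) = c * ber_expect F.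
Proof. by rewrite mulr_sumr; apply: eq_bigr => x _; rewrite mulrCA. Qed.

Lemma ber_vprob_ge0 n (A : pred {ffun 'I_n -> bool}) : 0 <= ber_vprob A.
Proof. by apply: sumr_ge0 => x _; rewrite mulr_ge0 ?ber_vweight_ge0. Qed.

Lemma ber_vprob_le1 n (A : pred {ffun 'I_n -> bool}) : ber_vprob A <= 1.
Proof.
rewrite -[leRHS](ber_expect_cst n); apply: ler_ber_expect => x.
by rewrite lern1 leq_b1.
Qed.

Lemma ber_vprob_sub n (A B : pred {ffun 'I_n -> bool}) :
  (forall x, A x -> B x) -> ber_vprob A <= ber_vprob B.
Proof.
move=> AB; apply: ler_ber_expect => x.
by case Ax: (A x); rewrite ?(AB _ Ax) ?ler0n.
Qed.

Definition flip_at n (l : 'I_n) (x : {ffun 'I_n -> bool}) : {ffun 'I_n -> bool} :=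
  [ffun i => if i == l then ~~ x i else x i].

Lemma flip_atK n (l : 'I_n) : involutive (flip_at l).
Proof. by move=> x; apply/ffunP => i; rewrite !ffunE; case: eqP; rewrite ?negbK. Qed.

Lemma flip_at_id n (l : 'I_n) x : flip_at l x l = ~~ x l.
Proof. by rewrite ffunE eqxx. Qed.

Lemma flip_at_neq n (l i : 'I_n) x : i != l -> flip_at l x i = x i.
Proof. by rewrite ffunE => /negbTE ->. Qed.

(* Pair each x with flip_at l x: at most one of them lies in A, and since p <= 1 - p
   each of the two weights is at most 1 - p times their sum. *)
Lemma ber_vprob_flip_exclusive n (l : 'I_n) (A B : pred {ffun 'I_n -> bool}) :
  p <= 1 - p ->
  (forall x, B (flip_at l x) = B x) -> (forall x, A x -> ~~ A (flip_at l x)) ->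
  ber_vprob (fun x => A x && B x) <= (1 - p) * ber_vprob B.
Proof.
move=> p_le_1Bp Bflip Aexcl.
pose W x := \prod_(i | i != l) berw (x i).
have weightE x : ber_vweight x = berw (x l) * W x by rewrite /ber_vweight (bigD1 l).
have W_flip x : W (flip_at l x) = W x.
  by apply: eq_bigr => i il; rewrite flip_at_neq.
have W_ge0 x : 0 <= W x by apply: prodr_ge0 => i _; apply: berw_ge0.
have pair_sum (F : {ffun 'I_n -> bool} -> R) :
    \sum_x F x = \sum_(x : {ffun _ -> bool} | ~~ x l) (F x + F (flip_at l x)).
  rewrite (bigID (fun x : {ffun _ -> bool} => x l)) /= addrC big_split /=; congr (_ + _).
  rewrite (reindex_inj (inv_inj (flip_atK l))) /=.
  by apply: eq_bigl => x; rewrite flip_at_id.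
rewrite /ber_vprob /ber_expect !pair_sum mulr_sumr; apply: ler_sum => x /negbTE xl.
rewrite !weightE W_flip flip_at_id xl Bflip /=.
have not_both : ~~ (A x && A (flip_at l x)) by apply/andP => -[/Aexcl/negP].
have := W_ge0 x; have := p_ge0; move: not_both.
by case: (A x); case: (A (flip_at l x)); case: (B x) => //= _ ? ?;
  rewrite ?mulr0 ?mulr1 ?addr0 ?add0r; nra.
Qed.

End BernoulliVector.

Section CosineBounds.
Variable R : realType.

Lemma cos1_le_cos (x : R) : x ^+ 2 <= 1 -> cos 1 <= cos x.
Proof.
move=> x2_le1; rewrite -(cos_norm x).
have x_le1 : `|x| <= 1.
  by rewrite -(ler_pXn2r (_ : (0 < 2)%N)) ?nnegrE // expr1n real_normK ?num_real.
have [->|x_neq1] := eqVneq `|x| 1; first by [].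
have pi_ge1 : (1 : R) <= pi by have := @pi_ge2 R; lra.
apply/ltW; rewrite ltr_cos ?in_itv /= ?normr_ge0 ?(le_trans x_le1) //; last by rewrite ler01.
by rewrite lt_neqAle x_neq1.
Qed.

(* Mean value theorem: sin y = y cos c for some c in [0, y]. *)
Lemma sin_ge_mul_cos1 (y : R) : 0 <= y <= 1 -> y * cos 1 <= sin y.
Proof.
move=> /andP[y_ge0 y_le1].
have [c /itvP cI] := @MVT_segment R sin cos 0 y y_ge0
  (fun x _ => is_derive_sin x) (continuous_subspaceT (@continuous_sin R)).
rewrite sin0 !subr0 => ->; rewrite [cos c * _]mulrC ler_wpM2l // cos1_le_cos //.
have c_ge0 : 0 <= c by rewrite cI.
have c_le_y : c <= y by rewrite cI.
nra.
Qed.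

(* 1 - cos x = 2 sin (x/2)^2 >= 2 (x/2 cos 1)^2. *)
Lemma one_sub_cos_ge (x : R) : x ^+ 2 <= 1 -> cos 1 ^+ 2 / 2 * x ^+ 2 <= 1 - cos x.
Proof.
wlog x_ge0 : x / 0 <= x.
  move=> H x2_le1; have [/H|x_lt0] := leP 0 x; first exact.
  by have := H (- x); rewrite cosN sqrrN; apply; lra.
move=> x2_le1.
have half_sin := @sin_ge_mul_cos1 (x / 2).
have cosE : cos x = 1 - 2 * sin (x / 2) ^+ 2.
  have x_double : x = (x / 2) *+ 2 by rewrite -mulr_natr mulfVK // pnatr_eq0.
  by rewrite {1}x_double cos_mulr2n cos2sin2; ring.
have := @cos1_gt0 R; set C := cos 1; rewrite cosE => C_gt0.
have lb : 0 <= x / 2 * C by apply: mulr_ge0 => //; lra.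
have : (x / 2 * C) ^+ 2 <= sin (x / 2) ^+ 2.
  rewrite ler_sqr ?nnegrE //; first by apply: half_sin; nra.
  by apply: le_trans lb (half_sin _); nra.
by rewrite exprMn; lra.
Qed.

End CosineBounds.

Section CharacteristicFunction.
Local Open Scope complex_scope.
Variables (R : realType) (p : R).

Definition expi (t : R) : R[i] := cos t +i* sin t.

Lemma expiD a b : expi (a + b) = expi a * expi b.
Proof.
by rewrite /expi cosD sinD; apply/eqP; rewrite eq_complex /=; apply/andP; split; apply/eqP; ring.
Qed.

Lemma expi0 : expi 0 = 1.
Proof. by rewrite /expi cos0 sin0. Qed.

Definition sqnormc (z : R[i]) : R := complex.Re z ^+ 2 + complex.Im z ^+ 2.

Lemma sqnormcM : {morph sqnormc : x y / x * y}.
Proof. by case=> a b [c d]; rewrite /sqnormc /=; ring. Qed.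

Lemma sqnormc1 : sqnormc 1 = 1.
Proof. by rewrite /sqnormc /= expr0n expr1n addr0. Qed.

Lemma Re_sqr_le_sqnormc (z : R[i]) : complex.Re z ^+ 2 <= sqnormc z.
Proof. by rewrite lerDl sqr_ge0. Qed.

Definition lin_form n (v : 'I_n -> R) (x : {ffun 'I_n -> bool}) : R :=
  \sum_i (x i : nat)%:R * v i.

Definition charfun n (v : 'I_n -> R) (t : R) : R[i] :=
  \sum_x (ber_vweight p x)%:C * expi (t * lin_form v x).

Lemma charfun_prod n (v : 'I_n -> R) t :
  charfun v t = \prod_i ((1 - p)%:C + p%:C * expi (t * v i)).
Proof.
transitivity (\sum_(x : {ffun 'I_n -> bool})
    \prod_i ((berw p (x i))%:C * expi (t * ((x i : nat)%:R * v i)))).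
  apply: eq_bigr => x _.
  by rewrite /lin_form mulr_sumr (big_morph expi expiD expi0) rmorph_prod -big_split.
transitivity (\prod_i \sum_(b : bool) (berw p b)%:C * expi (t * ((b : nat)%:R * v i))).
  by rewrite bigA_distr_bigA.
apply: eq_bigr => i _.
by rewrite big_bool /= mul0r mulr0 expi0 mulr1 mul1r addrC.
Qed.

Lemma Re_charfun n (v : 'I_n -> R) t :
  complex.Re (charfun v t) = ber_expect p (fun x => cos (t * lin_form v x)).
Proof.
rewrite /charfun raddf_sum; apply: eq_bigr => x _.
by rewrite /expi; simpc.
Qed.

Lemma sqnormc_charfun n (v : 'I_n -> R) t :
  sqnormc (charfun v t) = \prod_i (1 - 2 * p * (1 - p) * (1 - cos (t * v i))).
Proof.
rewrite charfun_prod (big_morph _ sqnormcM sqnormc1); apply: eq_bigr => i _.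
by rewrite /sqnormc /expi; simpc; rewrite /= exprMn sin2cos2; ring.
Qed.

End CharacteristicFunction.

Lemma prod1B_mul_1Dsum_le1 (R : realFieldType) n (a : 'I_n -> R) :
  (forall i, 0 <= a i <= 1) -> (\prod_i (1 - a i)) * (1 + \sum_i a i) <= 1.
Proof.
elim: n a => [|n IH] a a01; first by rewrite !big_ord0 addr0 mulr1.
rewrite big_ord_recr big_ord_recr /=.
set P := \prod_(i < n) _; set S := \sum_(i < n) _.
have a01' i : 0 <= a (widen_ord (leqnSn n) i) <= 1 by apply: a01.
have PS_le1 : P * (1 + S) <= 1 by apply: IH.
have P_ge0 : 0 <= P by apply: prodr_ge0 => i _; have := a01' i; lra.
have S_ge0 : 0 <= S by apply: sumr_ge0 => i _; have := a01' i; lra.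
have /andP[x_ge0 x_le1] := a01 ord_max; set x := a ord_max in x_ge0 x_le1 *.
have : 0 <= P * (x * S + x ^+ 2) by rewrite mulr_ge0 ?addr_ge0 ?mulr_ge0 ?sqr_ge0.
have -> : P * (1 - x) * (1 + (S + x)) = P * (1 + S) - P * (x * S + x ^+ 2) by ring.
lra.
Qed.

Lemma sqr_natr_sub_bounds (R : realFieldType) N (m m' : 'I_N) :
  m != m' -> 1 <= (m%:R - m'%:R : R) ^+ 2 <= N%:R ^+ 2.
Proof.
wlog lt_mm' : m m' / (m < m')%N.
  move=> H; have [/H//|/H|] := ltngtP m m'; last by move/val_inj => ->; rewrite eqxx.
  by rewrite -sqrrN opprB eq_sym; apply.
move=> _; rewrite -sqrrN opprB -natrB 1?ltnW // -!natrX (ler1n R) ler_nat.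
by have := ltn_ord m'; nia.
Qed.

Lemma sum_cos_sin_sqr (R : realType) N (a : 'I_N -> R) :
  (\sum_m cos (a m)) ^+ 2 + (\sum_m sin (a m)) ^+ 2 = \sum_m \sum_m' cos (a m - a m').
Proof.
rewrite !expr2 !mulr_suml -big_split; apply: eq_bigr => m _.
by rewrite !mulr_sumr -big_split; apply: eq_bigr => m' _; rewrite cosB.
Qed.

Section SmallBall.
Variables (R : realType) (p : R).
Hypotheses (p_ge0 : 0 <= p) (p_le1 : p <= 1).

Local Notation kappa := (p * (1 - p) * cos 1 ^+ 2).

(* Compare Re(phi)^2 <= |phi|^2 = prod (1 - a_i) with sum a_i >= kappa t^2. *)
Lemma Re_charfun_sqr_le n (v : 'I_n -> R) t :
  \sum_i v i ^+ 2 = 1 -> (forall i, (t * v i) ^+ 2 <= 1) ->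
  complex.Re (charfun p v t) ^+ 2 * (1 + kappa * t ^+ 2) <= 1.
Proof.
move=> v_unit tv_le1.
have q_ge0 : 0 <= 2 * p * (1 - p) by have := p_le1; have := p_ge0; nra.
have q_le_half : 2 * p * (1 - p) <= 1 / 2 by have := sqr_ge0 (2 * p - 1); lra.
pose a i := 2 * p * (1 - p) * (1 - cos (t * v i)).
have a01 i : 0 <= a i <= 1.
  have := cos_geN1 (t * v i); have := cos_le1 (t * v i); rewrite /a.
  by move=> ? ?; apply/andP; split; nra.
have sum_a_ge : kappa * t ^+ 2 <= \sum_i a i.
  have -> : kappa * t ^+ 2 = \sum_i 2 * p * (1 - p) * (cos 1 ^+ 2 / 2 * (t * v i) ^+ 2).
    rewrite -[LHS]mulr1 -[X in _ * X]v_unit mulr_sumr.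
    by apply: eq_bigr => i _; rewrite exprMn; field.
  by apply: ler_sum => i _; rewrite ler_wpM2l ?one_sub_cos_ge.
have Re_le : complex.Re (charfun p v t) ^+ 2 <= \prod_i (1 - a i).
  by rewrite (le_trans (Re_sqr_le_sqnormc _)) // sqnormc_charfun.
have sum_a_ge0 : 0 <= \sum_i a i by apply: sumr_ge0 => i _; have /andP[] := a01 i.
apply: le_trans (prod1B_mul_1Dsum_le1 a01).
apply: le_trans (_ : _ <= complex.Re (charfun p v t) ^+ 2 * (1 + \sum_i a i)) _.
  by rewrite ler_wpM2l ?sqr_ge0 ?lerD2l.
by rewrite ler_wpM2r // addr_ge0.
Qed.

Lemma Re_charfun_le n (v : 'I_n -> R) t tau :
  \sum_i v i ^+ 2 = 1 -> (forall i, (t * v i) ^+ 2 <= 1) ->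
  0 <= tau -> 1 <= kappa * t ^+ 2 * tau ^+ 2 -> complex.Re (charfun p v t) <= tau.
Proof.
move=> v_unit tv_le1 tau_ge0 tau_large.
have := Re_charfun_sqr_le v_unit tv_le1; set X := complex.Re _ => X_le.
have kt_ge0 : 0 <= kappa * t ^+ 2.
  by rewrite mulr_ge0 ?sqr_ge0 // mulr_ge0 ?sqr_ge0 // mulr_ge0 // subr_ge0.
have : X ^+ 2 <= tau ^+ 2 by have := sqr_ge0 X; nra.
by nra.
Qed.

Lemma ber_expect_trig_sqr n (v : 'I_n -> R) N s :
  ber_expect p (fun x => (\sum_(m < N) cos (m%:R * s * lin_form v x)) ^+ 2
                         + (\sum_(m < N) sin (m%:R * s * lin_form v x)) ^+ 2)
  = \sum_(m < N) \sum_(m' < N) complex.Re (charfun p v ((m%:R - m'%:R) * s)).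
Proof.
rewrite /ber_expect; under eq_bigr do rewrite sum_cos_sin_sqr mulr_sumr.
rewrite exchange_big; apply: eq_bigr => m _.
under eq_bigr do rewrite mulr_sumr.
rewrite exchange_big; apply: eq_bigr => m' _.
by rewrite Re_charfun; apply: eq_bigr => x _; rewrite -mulrBl -mulrBl.
Qed.

(* For small |y| every cos (m s y) is at least cos 1. *)
Lemma small_ball_le_sum_charfun n (v : 'I_n -> R) N s delta :
  (N%:R * s * delta) ^+ 2 <= 1 ->
  ber_vprob p [pred x | lin_form v x ^+ 2 <= delta ^+ 2] * (N%:R * cos 1) ^+ 2
  <= \sum_(m < N) \sum_(m' < N) complex.Re (charfun p v ((m%:R - m'%:R) * s)).
Proof.
move=> Nsd_le1; rewrite -ber_expect_trig_sqr mulrC -ber_expectZ //.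
apply: ler_ber_expect => // x /=.
have [y_small|_] := boolP (lin_form v x ^+ 2 <= delta ^+ 2); last first.
  by rewrite mulr0 addr_ge0 ?sqr_ge0.
rewrite mulr1; set Y := lin_form v x in y_small *.
have cos_sum_ge : N%:R * cos 1 <= \sum_(m < N) cos (m%:R * s * Y).
  rewrite -[N in N%:R]card_ord mulr_natl -sumr_const; apply: ler_sum => m _.
  apply: cos1_le_cos; apply: le_trans Nsd_le1.
  rewrite [leLHS]exprMn [leRHS]exprMn ler_pM ?sqr_ge0 // !exprMn ler_wpM2r ?sqr_ge0 //.
  by rewrite ler_sqr ?nnegrE // ler_nat ltnW.
have NC_ge0 : 0 <= N%:R * cos 1 :> R by apply/mulr_ge0/ltW/cos1_gt0.
apply: le_trans (_ : _ <= (\sum_(m < N) cos (m%:R * s * Y)) ^+ 2) _.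
  by rewrite ler_sqr ?nnegrE // (le_trans NC_ge0).
by rewrite lerDl sqr_ge0.
Qed.

Lemma sum_Re_charfun_le n (v : 'I_n -> R) N s tau :
  \sum_i v i ^+ 2 = 1 -> (forall i, (N%:R * s * v i) ^+ 2 <= 1) ->
  0 <= tau -> 1 <= kappa * s ^+ 2 * tau ^+ 2 ->
  \sum_(m < N) \sum_(m' < N) complex.Re (charfun p v ((m%:R - m'%:R) * s))
  <= N%:R + N%:R ^+ 2 * tau.
Proof.
move=> v_unit Nsv_le1 tau_ge0 tau_large.
have kappa_ge0 : 0 <= kappa by rewrite mulr_ge0 ?sqr_ge0 // mulr_ge0 // subr_ge0.
apply: le_trans (_ : _ <= \sum_(m < N) \sum_(m' < N) ((m == m')%:R + tau)) _.
  apply: ler_sum => m _; apply: ler_sum => m' _.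
  have [<-|neq_mm'] := eqVneq m m'.
    rewrite subrr mul0r Re_charfun.
    under eq_fun do rewrite mul0r cos0.
    by rewrite ber_expect_cst // lerDl.
  have /andP[d_ge1 d_leN] := sqr_natr_sub_bounds R neq_mm'.
  rewrite add0r; apply: Re_charfun_le => // [i|].
    apply: le_trans (Nsv_le1 i); rewrite !exprMn.
    by apply: ler_wpM2r; [exact: sqr_ge0 | apply: ler_wpM2r; [exact: sqr_ge0 | ]].
  apply: le_trans tau_large _; rewrite ler_wpM2r ?sqr_ge0 // ler_wpM2l //.
  by rewrite exprMn ler_peMl ?sqr_ge0.
have row_sum (m : 'I_N) : \sum_(m' < N) ((m == m')%:R + tau) = 1 + N%:R * tau.
  rewrite big_split /= sumr_const card_ord mulr_natl; congr (_ + _).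
  rewrite (bigD1 m) //= eqxx big1 ?addr0 // => m' /negbTE.
  by rewrite eq_sym => ->.
rewrite (eq_bigr _ (fun m _ => row_sum m)) sumr_const card_ord -[leLHS]mulr_natr.
by rewrite mulrDl mul1r mulrAC -expr2.
Qed.

End SmallBall.

Definition small_ball_bound (R : realType) (p d th : R) n :=
  forall v : 'I_n -> R, \sum_i v i ^+ 2 = 1 -> (forall i, v i ^+ 2 <= 4 * d ^+ 2) ->
    ber_vprob p [pred x | lin_form v x ^+ 2 <= d ^+ 2] <= th.

(* Esseen-type bound: choose tau = th cos(1)^2 / 2, N > 2 / (th cos(1)^2), a
   spacing s with kappa s^2 tau^2 = 1, and d = 1 / (2 N s). *)
Lemma small_ball (R : realType) (p th : R) : 0 < p -> p < 1 -> 0 < th ->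
  exists d : R, 0 < d /\ forall n, small_ball_bound p d th n.
Proof.
move=> p_gt0 p_lt1 th_gt0.
have p_ge0 : 0 <= p by exact: ltW.
have p_le1 : p <= 1 by exact: ltW.
have C_gt0 := @cos1_gt0 R; set C := cos 1 in C_gt0 *.
have kappa_gt0 : 0 < p * (1 - p) * C ^+ 2 by rewrite !mulr_gt0 ?exprn_gt0 // subr_gt0.
set kappa := p * (1 - p) * C ^+ 2 in kappa_gt0.
set tau := th * C ^+ 2 / 2.
have tau_gt0 : 0 < tau by rewrite divr_gt0 // mulr_gt0 // exprn_gt0.
have [N N_large] : exists N : nat, 2 / (th * C ^+ 2) < N%:R.
  exists (Num.Def.archi_bound (2 / (th * C ^+ 2))).
  by rewrite archi_boundP // divr_ge0 // ltW // mulr_gt0 // exprn_gt0.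
have N_gt0 : (0 : R) < N%:R.
  by apply: le_lt_trans N_large; rewrite divr_ge0 // ltW // mulr_gt0 // exprn_gt0.
set s := Num.sqrt (kappa * tau ^+ 2)^-1.
have s_gt0 : 0 < s by rewrite sqrtr_gt0 invr_gt0 mulr_gt0 // exprn_gt0.
have s_spacing : 1 <= kappa * s ^+ 2 * tau ^+ 2.
  rewrite sqr_sqrtr; last by rewrite invr_ge0 mulr_ge0 ?sqr_ge0 // ltW.
  by rewrite mulrAC mulfV // gt_eqF // mulr_gt0 // exprn_gt0.
have M_gt0 : 0 < N%:R * s by rewrite mulr_gt0.
set M := N%:R * s in M_gt0 *; set d := (2 * M)^-1.
have dM : 4 * d ^+ 2 * M ^+ 2 = 1 by rewrite /d; field; rewrite gt_eqF.
exists d; split; first by rewrite invr_gt0 mulr_gt0.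
move=> n v v_unit v_small.
have Mv_le1 i : (M * v i) ^+ 2 <= 1.
  by rewrite exprMn -dM mulrC ler_wpM2r ?sqr_ge0.
have Md_le1 : (M * d) ^+ 2 <= 1 by rewrite exprMn; lra.
have := le_trans (small_ball_le_sum_charfun p_ge0 p_le1 v Md_le1)
                 (sum_Re_charfun_le p_ge0 p_le1 v_unit Mv_le1 (ltW tau_gt0) s_spacing).
set P := ber_vprob _ _ => P_le.
set X := N%:R * C ^+ 2.
have X_gt0 : 0 < X by rewrite mulr_gt0 // exprn_gt0.
have thX_gt2 : 2 < th * X.
  by move: N_large; rewrite ltr_pdivrMr ?mulr_gt0 ?exprn_gt0 // /X mulrCA mulrA.
have : N%:R * (P * X) <= N%:R * (1 + th * X / 2).
  have -> : N%:R * (P * X) = P * (N%:R * C) ^+ 2 by rewrite /X exprMn; ring.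
  by have -> : N%:R * (1 + th * X / 2) = N%:R + N%:R ^+ 2 * tau by rewrite /X /tau; ring.
rewrite ler_pM2l // => PX_le.
by rewrite -(ler_pM2r X_gt0); lra.
Qed.

Section OrthogonalProjection.
Variables (R : realFieldType) (n : nat).
Implicit Types (P : 'M[R]_n) (x : 'rV[R]_n).

Definition orthoproj P := P^T = P /\ P *m P = P.

Definition qform P x : R := (x *m P *m x^T) 0 0.

Lemma qform_mul_tr k (V : 'M[R]_(n, k)) x :
  qform (V *m V^T) x = \sum_j (x *m V) 0 j ^+ 2.
Proof.
rewrite /qform mulmxA -[x *m V *m V^T *m x^T]mulmxA -trmx_mul mxE.
by apply: eq_bigr => j _; rewrite [_^T _ _]mxE expr2.
Qed.

Lemma qform_orthoproj P x : orthoproj P -> qform P x = \sum_j (x *m P) 0 j ^+ 2.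
Proof. by case=> P_sym P_idem; rewrite -{1}P_idem -{2}P_sym qform_mul_tr. Qed.

Lemma qform_ge0 P x : orthoproj P -> 0 <= qform P x.
Proof. by move/qform_orthoproj->; apply: sumr_ge0 => j _; apply: sqr_ge0. Qed.

Lemma orthoproj_row_sqr_sum P l : orthoproj P -> \sum_j P l j ^+ 2 = P l l.
Proof.
case=> P_sym P_idem; rewrite -{2}P_idem mxE; apply: eq_bigr => j _.
by rewrite expr2 -{4}P_sym mxE.
Qed.

Lemma orthoproj_diag_ge0 P i : orthoproj P -> 0 <= P i i.
Proof. by move/orthoproj_row_sqr_sum <-; apply: sumr_ge0 => j _; apply: sqr_ge0. Qed.

Lemma orthoproj_mul_tr k (V : 'M[R]_(n, k)) : V^T *m V = 1%:M -> orthoproj (V *m V^T).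
Proof.
move=> VV; split; first by rewrite trmx_mul trmxK.
by rewrite mulmxA -[V *m V^T *m V]mulmxA VV mulmx1.
Qed.

(* For an orthogonal projection |row l P|^2 = P l l, so this removes the projection
   onto the line through row l P. *)
Definition deflate P l : 'M[R]_n := P - (P l l)^-1 *: ((row l P)^T *m row l P).

Lemma deflateE P l i j : deflate P l i j = P i j - (P l l)^-1 * (P l i * P l j).
Proof. by rewrite !mxE big_ord1 !mxE. Qed.

Lemma qform_deflate P l x :
  qform (deflate P l) x = qform P x - (x *m (row l P)^T) 0 0 ^+ 2 / P l l.
Proof.
rewrite /qform /deflate mulmxBr mulmxBl -scalemxAr -scalemxAl.
set u := row l P.
have -> : x *m (u^T *m u) *m x^T = (x *m u^T) *m (x *m u^T)^T.
  by rewrite trmx_mul trmxK !mulmxA.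
by rewrite !mxE big_ord1 !mxE expr2 mulrC.
Qed.

Lemma row_deflate P l : P l l != 0 -> row l (deflate P l) = 0.
Proof. by move=> Pll; apply/rowP => j; rewrite mxE deflateE mulKf // subrr mxE. Qed.

Section Deflation.
Variables (P : 'M[R]_n) (l : 'I_n).
Hypotheses (P_orthoproj : orthoproj P) (Pll_neq0 : P l l != 0).
Let u := row l P.

Lemma row_orthoproj_mul : u *m P = u.
Proof. by rewrite -row_mul P_orthoproj.2. Qed.

Lemma orthoproj_mul_row_tr : P *m u^T = u^T.
Proof. by rewrite -[P in P *m _]P_orthoproj.1 -trmx_mul row_orthoproj_mul. Qed.

Lemma row_mul_row_tr : u *m u^T = (P l l)%:M.
Proof.
rewrite [LHS]mx11_scalar mxE -(orthoproj_row_sqr_sum l P_orthoproj).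
by congr _%:M; apply: eq_bigr => j _; rewrite !mxE expr2.
Qed.

Lemma orthoproj_deflate : orthoproj (deflate P l).
Proof.
have PA : P *m (u^T *m u) = u^T *m u by rewrite mulmxA orthoproj_mul_row_tr.
have AP : u^T *m u *m P = u^T *m u by rewrite -mulmxA row_orthoproj_mul.
have AA : u^T *m u *m (u^T *m u) = P l l *: (u^T *m u).
  by rewrite mulmxA -[u^T *m u *m u^T]mulmxA row_mul_row_tr mul_mx_scalar scalemxAl.
split; first by rewrite /deflate linearB /= linearZ /= trmx_mul trmxK P_orthoproj.1.
rewrite /deflate mulmxBl !mulmxBr P_orthoproj.2 -scalemxAr PA -!scalemxAl AP.
by rewrite -scalemxAr AA !scalerA divfK // subrr subr0.
Qed.

Lemma mxtrace_deflate : \tr (deflate P l) = \tr P - 1.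
Proof.
rewrite /deflate raddfB /= mxtraceZ mxtrace_mulC row_mul_row_tr mxtrace_scalar.
by rewrite mulVf.
Qed.

End Deflation.
End OrthogonalProjection.

Section RowSmallBall.
Variables (R : realType) (p : R).
Hypotheses (p_gt0 : 0 < p) (p_le_1Bp : p <= 1 - p).

Let p_ge0 : 0 <= p. Proof. exact: ltW. Qed.
Let p_le1 : p <= 1. Proof. by have := p_gt0; have := p_le_1Bp; lra. Qed.

Definition xrow n (x : {ffun 'I_n -> bool}) : 'rV[R]_n := \row_i (x i : nat)%:R.

Lemma xrow_flip_at n (l : 'I_n) x :
  xrow (flip_at l x) = xrow x + ((~~ x l : nat)%:R - (x l : nat)%:R) *: delta_mx 0 l.
Proof.
apply/rowP => i; rewrite !mxE eqxx /=; have [->|il] := eqVneq i l.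
  by rewrite flip_at_id mulr1 addrC subrK.
by rewrite flip_at_neq // mulr0 addr0.
Qed.

Lemma lin_form_row n (P : 'M[R]_n) l x :
  (xrow x *m (row l P)^T) 0 0 = lin_form (fun i => P l i) x.
Proof. by rewrite mxE; apply: eq_bigr => i _; rewrite !mxE. Qed.

(* Flipping x_l moves <x, row l P> by +-P l l but leaves x (deflate P l) unchanged;
   when P l l > 4 d^2 the two values cannot both be at most sqrt(P l l) d. *)
Lemma ber_qform_deflate_le n (P : 'M[R]_n) l d :
  orthoproj P -> 4 * d ^+ 2 < P l l ->
  ber_vprob p [pred x | qform P (xrow x) <= d ^+ 2]
  <= (1 - p) * ber_vprob p [pred x | qform (deflate P l) (xrow x) <= d ^+ 2].
Proof.
move=> P_orthoproj S_large.
have S_gt0 : 0 < P l l by apply: le_lt_trans S_large; rewrite mulr_ge0 ?sqr_ge0.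
have S_neq0 : P l l != 0 by rewrite gt_eqF.
have D_orthoproj := orthoproj_deflate P_orthoproj S_neq0.
pose a x := (xrow x *m (row l P)^T) 0 0.
apply: le_trans (_ : _ <= ber_vprob p (fun x => (a x ^+ 2 <= P l l * d ^+ 2)
    && (qform (deflate P l) (xrow x) <= d ^+ 2))) _.
  apply: (ber_vprob_sub p_ge0 p_le1) => x /= P_small.
  rewrite -(ler_pdivrMl _ _ S_gt0) mulrC qform_deflate -/(a x).
  have := qform_ge0 (xrow x) D_orthoproj; rewrite qform_deflate -/(a x).
  have : 0 <= a x ^+ 2 / P l l by rewrite divr_ge0 ?sqr_ge0 // ltW.
  by move=> ? ?; apply/andP; split; lra.
apply: (ber_vprob_flip_exclusive (l := l) p_ge0 p_le1 p_le_1Bp) => x /=.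
  rewrite !(qform_orthoproj _ D_orthoproj) xrow_flip_at mulmxDl -scalemxAl -rowE.
  by rewrite row_deflate // scaler0 addr0.
have a_flip : a (flip_at l x) = a x + ((~~ x l : nat)%:R - (x l : nat)%:R) * P l l.
  by rewrite /a xrow_flip_at mulmxDl -scalemxAl -rowE !mxE.
have e_sqr : ((~~ x l : nat)%:R - (x l : nat)%:R : R) ^+ 2 = 1.
  by case: (x l); rewrite /= ?subr0 ?sub0r ?sqrrN expr1n.
rewrite a_flip; move: e_sqr; set e := (_ - _ : R) => e_sqr a_small.
apply/negP => a'_small.
have : P l l ^+ 2 <= 4 * P l l * d ^+ 2.
  have -> : P l l ^+ 2 = (a x + e * P l l - a x) ^+ 2.
    by rewrite addrAC subrr add0r exprMn e_sqr mul1r.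
  by have := sqr_ge0 (a x + e * P l l + a x); nra.
by nra.
Qed.

(* x P x^T >= <x, row l P>^2 / P l l, and the coordinates of the unit vector
   row l P / sqrt (P l l) are bounded by the diagonal of P (Cauchy-Schwarz). *)
Lemma ber_qform_small_diag n (P : 'M[R]_n) l d th :
  orthoproj P -> 0 < P l l -> (forall i, P i i <= 4 * d ^+ 2) ->
  small_ball_bound p d th n ->
  ber_vprob p [pred x | qform P (xrow x) <= d ^+ 2] <= th.
Proof.
move=> P_orthoproj S_gt0 diag_small small_ball_d.
have S_neq0 : P l l != 0 by rewrite gt_eqF.
have D_orthoproj := orthoproj_deflate P_orthoproj S_neq0.
have sqrtS_sqr : Num.sqrt (P l l) ^+ 2 = P l l by rewrite sqr_sqrtr // ltW.
pose v i := P l i / Num.sqrt (P l l).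
have v_sqr i : v i ^+ 2 = P l i ^+ 2 / P l l by rewrite expr_div_n sqrtS_sqr.
apply: le_trans (small_ball_d v _ _).
- apply: (ber_vprob_sub p_ge0 p_le1) => x /= P_small.
  have lin_formE : lin_form v x ^+ 2 = lin_form (fun i => P l i) x ^+ 2 / P l l.
    rewrite -sqrtS_sqr -expr_div_n; congr (_ ^+ 2).
    by rewrite /lin_form mulr_suml; apply: eq_bigr => i _; rewrite mulrA.
  have := qform_ge0 (xrow x) D_orthoproj; rewrite qform_deflate lin_form_row.
  by rewrite lin_formE; lra.
- under eq_bigr do rewrite v_sqr.
  by rewrite -mulr_suml orthoproj_row_sqr_sum // mulfV.
- move=> i; rewrite v_sqr; apply: le_trans (diag_small i).
  have := orthoproj_diag_ge0 i D_orthoproj; rewrite deflateE.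
  by rewrite -expr2 mulrC; lra.
Qed.

Lemma ber_qform_small_ball n d th :
  small_ball_bound p d th n ->
  forall j (P : 'M[R]_n), orthoproj P -> \tr P = j%:R ->
  ber_vprob p [pred x | qform P (xrow x) <= d ^+ 2] <= Num.max ((1 - p) ^+ j) th.
Proof.
move=> small_ball_d; elim=> [|j IH] P P_orthoproj trP.
  by rewrite expr0 le_max ber_vprob_le1.
have [/existsP[l S_large]|diag_small] := boolP [exists l, 4 * d ^+ 2 < P l l].
  apply: le_trans (ber_qform_deflate_le P_orthoproj S_large) _.
  have S_neq0 : P l l != 0.
    by rewrite gt_eqF // (le_lt_trans _ S_large) // mulr_ge0 ?sqr_ge0.
  have trD : \tr (deflate P l) = j%:R by rewrite mxtrace_deflate // trP -natr1 addrK.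
  have Bp_ge0 : 0 <= 1 - p by rewrite subr_ge0.
  have pow_ge0 : 0 <= (1 - p) ^+ j by rewrite exprn_ge0.
  apply: le_trans (ler_wpM2l Bp_ge0 (IH _ (orthoproj_deflate P_orthoproj S_neq0) trD)) _.
  rewrite exprS; have [th_le|th_gt] := leP th ((1 - p) ^+ j).
    by rewrite le_max lexx.
  by rewrite le_max; apply/orP; right; have := p_gt0; nra.
have [l S_gt0] : exists l, 0 < P l l.
  apply/existsP; apply: contraTT isT => /existsPn no_pos.
  have : \tr P <= 0 by apply: sumr_le0 => i _; rewrite leNgt no_pos.
  by rewrite trP lern0.
apply: le_trans (ber_qform_small_diag P_orthoproj S_gt0 _ small_ball_d) _.
  by move=> i; rewrite leNgt; apply: contraNN diag_small => ?; apply/existsP; exists i.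
by rewrite le_max lexx orbT.
Qed.

End RowSmallBall.

Section BernoulliMatrix.
Variables (R : realType) (p : R).
Hypotheses (p_ge0 : 0 <= p) (p_le1 : p <= 1).

Definition rowf m n (M : 'M[bool]_(m, n)) (i : 'I_m) : {ffun 'I_n -> bool} :=
  [ffun j => M i j].

Lemma ber_weight_ge0 m n (M : 'M[bool]_(m, n)) : 0 <= ber_weight p M.
Proof. by apply: prodr_ge0 => i _; apply: prodr_ge0 => j _; apply: berw_ge0. Qed.

Lemma sum_ber_weight_prod_rows m n (h : {ffun 'I_n -> bool} -> R) :
  \sum_(M : 'M[bool]_(m, n)) ber_weight p M * \prod_i h (rowf M i) = ber_expect p h ^+ m.
Proof.
rewrite -[m in RHS]card_ord -prodr_const bigA_distr_bigA /=.
pose mx (F : {ffun 'I_m -> {ffun 'I_n -> bool}}) : 'M[bool]_(m, n) := \matrix_(i, j) F i j.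
have mxK : cancel mx (fun M => [ffun i => rowf M i]).
  by move=> F; apply/ffunP => i; apply/ffunP => j; rewrite !ffunE mxE.
have rowfK : cancel (fun M => [ffun i => rowf M i]) mx.
  by move=> M; apply/matrixP => i j; rewrite mxE !ffunE.
rewrite (reindex mx); last by exists (fun M => [ffun i => rowf M i]) => ? _.
apply: eq_bigr => F _; rewrite /ber_weight -big_split; apply: eq_bigr => i _.
have -> : rowf (mx F) i = F i by apply/ffunP => j; rewrite ffunE mxE.
by congr (_ * _); apply: eq_bigr => j _; rewrite mxE.
Qed.

Lemma ber_prob_mulr_le m n (E : pred 'M[bool]_(m, n)) a (F : 'M[bool]_(m, n) -> R) :
  (forall M, 0 <= F M) -> (forall M, E M -> a <= F M) ->
  ber_prob p E * a <= \sum_M ber_weight p M * F M.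
Proof.
move=> F_ge0 E_F; rewrite /ber_prob mulr_suml [leRHS](bigID E) /= -[leLHS]addr0.
apply: lerD; first by apply: ler_sum => M /E_F a_le; rewrite ler_wpM2l ?ber_weight_ge0.
by apply: sumr_ge0 => M _; rewrite mulr_ge0 ?ber_weight_ge0.
Qed.

End BernoulliMatrix.

Lemma prod_penalty_ge (R : realFieldType) (I : finType) (Y : I -> R) (t b : R) (m L : nat) :
  0 < t -> 0 < b <= 1 -> (0 < L)%N -> (forall i, 0 <= Y i) ->
  (\sum_i Y i) * L%:R <= t * m%:R ->
  b ^+ (m %/ L) <= \prod_i (if Y i <= t then 1 else b).
Proof.
move=> t_gt0 /andP[b_gt0 b_le1] L_gt0 Y_ge0 sum_small.
set bad := [set i | t < Y i].
have -> : \prod_i (if Y i <= t then 1 else b) = b ^+ #|bad|.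
  rewrite (bigID (mem bad)) /= [X in _ * X]big1 ?mulr1 => [|i]; last first.
    by rewrite inE -leNgt => ->.
  by rewrite -prodr_const; apply: eq_bigr => i; rewrite inE ltNge => /negbTE ->.
have bad_mass : #|bad|%:R * t <= \sum_i Y i.
  rewrite (bigID (mem bad)) /= -[leLHS]addr0 lerD ?sumr_ge0 //.
  by rewrite mulr_natl -sumr_const; apply: ler_sum => i; rewrite inE => /ltW.
have : (#|bad| * L <= m)%N.
  rewrite -(ler_nat R) natrM -(ler_pM2l t_gt0) mulrA [t * _]mulrC.
  by apply: le_trans sum_small; rewrite ler_wpM2r.
by rewrite -leq_divRL // => bad_le; rewrite ler_wiXn2l // ltW.
Qed.

Lemma hs_norm_rows (R : realType) m n k (M : 'M[bool]_(m, n)) (V : 'M[R]_(n, k)) :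
  hs_norm (real_of_bmx R M *m V) = Num.sqrt (\sum_i qform (V *m V^T) (xrow R (rowf M i))).
Proof.
congr Num.sqrt; apply: eq_bigr => i _; rewrite qform_mul_tr; apply: eq_bigr => j _.
by rewrite !mxE; congr (_ ^+ 2); apply: eq_bigr => l _; rewrite !mxE ffunE.
Qed.

Lemma ber_row_small_ball (R : realType) (p : R) k : 0 < p -> p <= 1 - p ->
  exists d : R, 0 < d /\ forall n (V : 'M[R]_(n, k)), V^T *m V = 1%:M ->
    ber_vprob p [pred x | qform (V *m V^T) (xrow R x) <= d ^+ 2] <= (1 - p) ^+ k.
Proof.
move=> p_gt0 p_le_1Bp.
have p_lt1 : p < 1 by lra.
have A_gt0 : 0 < (1 - p) ^+ k by rewrite exprn_gt0 // subr_gt0.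
have [d [d_gt0 small_ball_d]] := small_ball p_gt0 p_lt1 A_gt0.
exists d; split => // n V VV.
have trP : \tr (V *m V^T) = k%:R by rewrite mxtrace_mulC VV mxtrace1.
have := ber_qform_small_ball p_gt0 p_le_1Bp (small_ball_d n) (orthoproj_mul_tr VV) trP.
by rewrite maxxx.
Qed.

(* Markov: on the event, at most m / L rows x have x V V^T x^T > d^2, so the product
   over rows of (1 if x V V^T x^T <= d^2 else b) is at least b^(m / L); its
   expectation factorises over the independent rows. *)
Lemma ber_prob_hs_norm_le (R : realType) (p : R) m n k (V : 'M[R]_(n, k)) (d b : R) (L : nat) :
  0 <= p -> p <= 1 -> 0 < d -> 0 < b <= 1 -> (0 < L)%N -> (n <= 2 * m)%N ->
  ber_prob p (fun M : 'M[bool]_(m, n) =>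
                hs_norm (real_of_bmx R M *m V) <= d / (2 * L%:R) * Num.sqrt n%:R)
    * b ^+ (m %/ L)
  <= (ber_vprob p [pred x | qform (V *m V^T) (xrow R x) <= d ^+ 2] + b) ^+ m.
Proof.
move=> p_ge0 p_le1 d_gt0 b01 L_gt0 n_le_2m.
have /andP[b_gt0 b_le1] := b01.
set c := d / (2 * L%:R).
have c_ge0 : 0 <= c by rewrite divr_ge0 ?mulr_ge0 // ltW.
have cL_small : c ^+ 2 * n%:R * L%:R <= d ^+ 2 * m%:R.
  have -> : c ^+ 2 * n%:R * L%:R = d ^+ 2 * (n%:R / (4 * L%:R)).
    by rewrite /c; field; rewrite pnatr_eq0 -lt0n.
  rewrite ler_wpM2l ?sqr_ge0 // ler_pdivrMr ?mulr_gt0 ?ltr0n //.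
  apply: le_trans (_ : n%:R <= m%:R * 2) _; first by rewrite -natrM ler_nat mulnC.
  apply: ler_wpM2l => //; have : (1 : R) <= L%:R by rewrite ler1n.
  lra.
have c_sqrt : c * Num.sqrt n%:R = Num.sqrt (c ^+ 2 * n%:R).
  by rewrite sqrtrM ?sqr_ge0 // sqrtr_sqr ger0_norm.
have qform_ge0 x : 0 <= qform (V *m V^T) x.
  by rewrite qform_mul_tr sumr_ge0 // => j _; rewrite sqr_ge0.
set A := [pred x | qform (V *m V^T) (xrow R x) <= d ^+ 2].
pose g x := if A x then 1 else b.
have g_ge0 x : 0 <= g x by rewrite /g; case: ifP => _; lra.
apply: le_trans (ber_prob_mulr_le p_ge0 p_le1 (F := fun M => \prod_i g (rowf M i)) _ _) _.
- by move=> M; rewrite prodr_ge0.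
- have cn_ge0 : 0 <= c ^+ 2 * n%:R by rewrite mulr_ge0 ?sqr_ge0.
  move=> M /=; rewrite hs_norm_rows c_sqrt ler_sqrt // => hs_small.
  apply: prod_penalty_ge => //; first by rewrite exprn_gt0.
  by apply: le_trans cL_small; rewrite ler_wpM2r.
rewrite sum_ber_weight_prod_rows //; apply: lerXn2r; rewrite ?nnegrE.
- by apply: sumr_ge0 => x _; rewrite mulr_ge0 ?ber_vweight_ge0.
- by rewrite addr_ge0 ?ber_vprob_ge0 // ltW.
rewrite -(ber_expect_cst p n b) -ber_expectD //.
by apply: ler_ber_expect => // x; rewrite /g; case: (A x) => /=; lra.
Qed.

Lemma exists_expr_le (R : realType) (z e : R) : 0 <= z < 1 -> 0 < e -> exists L, z ^+ L <= e.
Proof.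
move=> /andP[z_ge0 z_lt1] e_gt0; have z_norm : `|z| < 1 by rewrite ger0_norm.
have /cvgr_lt/(_ e e_gt0) [N _ small] := cvg_expr z_norm.
by exists N; apply/ltW/small/leqnn.
Qed.

(* Choose b with A + b < B and L with ((A + b) / B)^L <= b / 2; the remaining
   factor 2^-(m / L) is eventually below g. *)
Lemma penalty_tradeoff (R : realType) (A B g : R) : 0 <= A < B -> 0 < g ->
  exists b L m0, [/\ 0 < b <= 1, (0 < L)%N &
    forall m, (m0 <= m)%N -> (A + b) ^+ m <= b ^+ (m %/ L) * (g * B ^+ m)].
Proof.
move=> /andP[A_ge0 A_lt_B] g_gt0.
pose b := Num.min ((B - A) / 2) (1 / 2).
have b_gt0 : 0 < b by rewrite lt_min; apply/andP; split; lra.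
have b_le : b <= (B - A) / 2 /\ b <= 1 / 2 by split; rewrite ge_min lexx ?orbT.
have B_gt0 : 0 < B by lra.
have z01 : 0 <= (A + b) / B < 1.
  by rewrite divr_ge0 ?ltr_pdivrMr //= ?mul1r; lra.
have half_b_gt0 : 0 < b / 2 by lra.
have half01 : 0 <= (1 / 2 : R) < 1 by apply/andP; split; lra.
have [L0 zL0_small] := exists_expr_le z01 half_b_gt0.
have [q0 half_small] := exists_expr_le half01 g_gt0.
exists b, L0.+1, (L0.+1 * q0)%N; split => //; first by rewrite b_gt0 /=; lra.
move=> m m_large.
have /andP[z_ge0 z_lt1] := z01.
have q0_le : (q0 <= m %/ L0.+1)%N by rewrite leq_divRL // mulnC.
have -> : (A + b) ^+ m = ((A + b) / B) ^+ m * B ^+ m by rewrite -exprMn divfK ?gt_eqF.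
rewrite mulrA; apply: ler_wpM2r; first by rewrite exprn_ge0 // ltW.
apply: le_trans (_ : _ <= (((A + b) / B) ^+ L0.+1) ^+ (m %/ L0.+1)) _.
  rewrite -exprM; apply: ler_wiXn2l; [exact: z_ge0 | exact: ltW | ].
  by rewrite mulnC leq_trunc_div.
apply: le_trans (_ : _ <= (b / 2) ^+ (m %/ L0.+1)) _.
  apply: lerXn2r; rewrite ?nnegrE ?exprn_ge0 //; first by lra.
  apply: le_trans zL0_small; rewrite exprS ler_piMl ?exprn_ge0 //; exact: ltW.
rewrite exprMn; apply: ler_wpM2l; first by rewrite exprn_ge0 // ltW.
by apply: le_trans half_small; rewrite mul1r; apply: ler_wiXn2l => //; lra.
Qed.

Unset Implicit Arguments. Set Strict Implicit. Set Printing Implicit Defensive.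

Theorem lemma2p7 (R : realType) (p : R) (k : nat) (eps : R) :
  0 < p -> p <= 2^-1 -> (1 <= k)%N -> 0 < eps ->
  exists c : R, 0 < c /\
  exists n0 : nat, forall (n : nat) (V : 'M[R]_(n, k)),
    (n0 <= n)%N ->
    V^T *m V = 1%:M ->
    ber_prob p (fun M : 'M[bool]_(n - k, n) =>
                  hs_norm (real_of_bmx R M *m V) <= c * Num.sqrt (n%:R))
      <= (1 - p + eps) ^+ (k * n).
Proof.
move=> p_gt0 p_le_half k_gt0 eps_gt0.
have p_le_1Bp : p <= 1 - p by lra.
have p_ge0 : 0 <= p by lra.
have p_le1 : p <= 1 by lra.
have [d [d_gt0 row_small]] := ber_row_small_ball k p_gt0 p_le_1Bp.
have row_lt_target : 0 <= (1 - p) ^+ k < (1 - p + eps) ^+ k.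
  by rewrite exprn_ge0 ?ltrXn2r -?lt0n ?nnegrE //=; lra.
have base_gt0 : 0 < 1 - p + eps by lra.
have [b [L [m0 [b01 L_gt0 tradeoff]]]] :=
  penalty_tradeoff row_lt_target (exprn_gt0 k (exprn_gt0 k base_gt0)).
exists (d / (2 * L%:R)); split; first by rewrite divr_gt0 // mulr_gt0 // ltr0n.
exists (2 * k + m0)%N => n V n_large VV.
have [k_le_n n_le_2m m0_le_m] : [/\ (k <= n)%N, (n <= 2 * (n - k))%N & (m0 <= n - k)%N].
  by clear -n_large; split; lia.
have -> : (1 - p + eps) ^+ (k * n) = (1 - p + eps) ^+ k ^+ k * (1 - p + eps) ^+ k ^+ (n - k).
  by rewrite -exprD subnKC // exprM.
have /andP[b_gt0 _] := b01.
rewrite -(ler_pM2r (exprn_gt0 ((n - k) %/ L) b_gt0)) [leRHS]mulrC.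
apply: le_trans (ber_prob_hs_norm_le V p_ge0 p_le1 d_gt0 b01 L_gt0 n_le_2m) _.
apply: le_trans (tradeoff _ m0_le_m); apply: lerXn2r; rewrite ?nnegrE ?lerD2r ?row_small //.
  by rewrite addr_ge0 ?ber_vprob_ge0 // ltW.
by rewrite addr_ge0 ?exprn_ge0 ?subr_ge0 // ltW.
Qed.
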